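(* Let $K\ge 2$ and let $(\mathbf{H},D,\mathbf{Z})$ follow the conditionally symmetric multidimensional Gaussian mixture model (csmGmm) described in the context. Define the local false discovery rate $$lfdr(\mathbf{z})=\Pr(\mathbf{H}\in\mathcal{H}_0\mid \mathbf{Z}=\mathbf{z})=\frac{\sum_{l:\mathbf{h}^l\in\mathcal{H}_0}\sum_{m=1}^{M_{b_l}}\pi_{b_l m}\prod_{k=1}^K\phi(z_k-h^l_k\mu_{b_l,m,k})}{\sum_{l=0}^{3^K-1}\sum_{m=1}^{M_{b_l}}\pi_{b_l m}\prod_{k=1}^K\phi(z_k-h^l_k\mu_{b_l,m,k})},\qquad \mathbf{z}\in\mathbb{R}^K,$$ where $\phi$ is the standard normal density and $\mathcal{H}_0=\{\mathbf{h}\in\{-1,0,1\}^K:\sum_{k=1}^K|h_k|<K\}$. Then for every $k\in\{1,\dots,K\}$, with all coordinates $z_{k'}$, $k'\neq k$, held fixed, $lfdr(\mathbf{z})$ is non-increasing in $z_k$ on $z_k>0$ and non-decreasing in $z_k$ on $z_k<0$. Consequently the csmGmm never produces incongruous results: whenever $\mathbf{z},\mathbf{z}'\in\mathbb{R}^K$ satisfy $\mathrm{sign}(z_k)=\mathrm{sign}(z'_k)$ and $|z_k|\ge|z'_k|$ for all $k$, we have $lfdr(\mathbf{z})\le lfdr(\mathbf{z}')$.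
   Context: Setting: large-scale testing of the composite null $\bigcup_{k=1}^K\{\theta_k=0\}$ for a vector of $K$ parameters using a vector of test statistics $\mathbf{Z}=(Z_1,\dots,Z_K)^T$. The latent association configuration is $\mathbf{H}\in\{-1,0,1\}^K$ ($H_k=0$: $\theta_k=0$; $H_k=\pm1$: $\theta_k$ positive/negative). Enumerate all $3^K$ configurations as $\mathbf{h}^0,\dots,\mathbf{h}^{3^K-1}$ with $\mathbf{h}^0=(0,\dots,0)^T$. The binary representation of $\mathbf{h}^l$ is $b_l=\sum_{k=1}^K 2^{K-k}|h^l_k|\in\{0,\dots,2^K-1\}$; its $k$-th binary digit is $|h^l_k|$. csmGmm: for each $b\in\{0,\dots,2^K-1\}$ there is a positive integer $M_b$ (with $M_0=1$), mean-magnitude vectors $\boldsymbol{\mu}_{b,m}=(\mu_{b,m,1},\dots,\mu_{b,m,K})^T$, $m=1,\dots,M_b$, and probabilities $\pi_{bm}\ge0$. Here $\mu_{b,m,k}=0$ if the $k$-th binary digit of $b$ is $0$ and $\mu_{b,m,k}>0$ otherwise, and $\mu_{2^K-1,m,k}\ge\mu_{b,m',k}$ for all $b<2^K-1$ and all $m,m',k$. The joint law of $(\mathbf{H},D)$ is $\Pr(\mathbf{H}=\mathbf{h}^l,D=m)=\pi_{b_l m}$ for $m=1,\dots,M_{b_l}$ (so configurations with the same binary representation share mixing probabilities), with $\sum_{l=0}^{3^K-1}\sum_{m=1}^{M_{b_l}}\pi_{b_l m}=1$. Conditional on $\mathbf{H}=\mathbf{h}^l$, $D=m$, $\mathbf{Z}\sim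 N_K(\mathrm{diag}(\mathbf{h}^l)\boldsymbol{\mu}_{b_l,m},\mathbf{I}_K)$. *)

From HB Require Import structures.
From mathcomp Require Import all_boot all_order all_algebra.
From mathcomp Require Import all_classical all_reals all_analysis.
Set Implicit Arguments. Unset Strict Implicit. Unset Printing Implicit Defensive.
Import Order.TTheory GRing.Theory Num.Theory.
Local Open Scope ring_scope.

Definition phi (R : realType) (x : R) : R :=
  (Num.sqrt (2 * pi))^-1 * expR (- (x ^+ 2) / 2).

(* A configuration h in {-1,0,1}^K is encoded as a finite function
   'I_K -> 'I_3, the code c : 'I_3 standing for the integer c - 1. *)
Definition cfg (K : nat) := {ffun 'I_K -> 'I_3}.

Definition hz (c : 'I_3) : int := (nat_of_ord c)%:Z - 1.

(* Binary representation of h: encoded as the set of indices k with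
   |h_k| = 1 (the k-th binary digit of b_l is |h^l_k|).
   set0 plays the role of b = 0, setT the role of b = 2^K - 1. *)
Definition bin (K : nat) (h : cfg K) : {set 'I_K} := [set k | absz (hz (h k)) == 1%N].

Definition inH0 (K : nat) (h : cfg K) : bool :=
  (\sum_(k < K) absz (hz (h k)) < K)%N.

Definition cfg_term (R : realType) (K : nat) (M : {set 'I_K} -> nat)
  (pr : {set 'I_K} -> nat -> R) (mu : {set 'I_K} -> nat -> 'I_K -> R)
  (z : 'I_K -> R) (h : cfg K) : R :=
  \sum_(1 <= m < (M (bin h)).+1)
     pr (bin h) m * \prod_(k < K) phi (z k - (hz (h k))%:~R * mu (bin h) m k).

Definition lfdr (R : realType) (K : nat) (M : {set 'I_K} -> nat)
  (pr : {set 'I_K} -> nat -> R) (mu : {set 'I_K} -> nat -> 'I_K -> R)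
  (z : 'I_K -> R) : R :=
  (\sum_(h : cfg K | inH0 h) cfg_term M pr mu z h) /
  (\sum_(h : cfg K) cfg_term M pr mu z h).

Definition upd (R : Type) (K : nat) (z : 'I_K -> R) (k : 'I_K) (x : R) : 'I_K -> R :=
  fun j => if j == k then x else z j.

Definition csmGmm_params (R : realType) (K : nat) (M : {set 'I_K} -> nat)
  (pr : {set 'I_K} -> nat -> R) (mu : {set 'I_K} -> nat -> 'I_K -> R) : Prop :=
  M (finset.set0 : {set 'I_K}) = 1%N /\
      (forall b, (0 < M b)%N) /\
      (forall b m, (1 <= m <= M b)%N -> 0 <= pr b m) /\
      (forall b m k, (1 <= m <= M b)%N -> k \notin b -> mu b m k = 0) /\
      (forall b m k, (1 <= m <= M b)%N -> k \in b -> 0 < mu b m k) /\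
      (forall b m m' k, b != [set: 'I_K] -> (1 <= m <= M [set: 'I_K])%N -> (1 <= m' <= M b)%N ->
          mu b m' k <= mu [set: 'I_K] m k) /\
    \sum_(h : cfg K) \sum_(1 <= m < (M (bin h)).+1) pr (bin h) m = 1.

From HB Require Import structures.
From mathcomp Require Import all_boot all_order all_algebra.
From mathcomp Require Import all_classical all_reals all_analysis.
From mathcomp Require Import ring lra.
Import Order.TTheory GRing.Theory Num.Theory.
Set Implicit Arguments. Unset Strict Implicit. Unset Printing Implicit Defensive.
Local Open Scope ring_scope.

(* Fix a coordinate k and pair each configuration h with the one obtained by
   negating h_k: both have the same binary representation, the same null
   status and the same factors off coordinate k.  Hence, as functions of
   x = z_k, the null and the alternative masses are nonnegative combinations
   of folded densities phi(x - s) + phi(x + s), which are proportional to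
   exp(-(s^2 + x^2)/2) cosh(s x).  Null terms have |s| <= mu_{b,m,k} and
   alternative terms |s| = mu_{2^K-1,m',k}, so by the csmGmm ordering of the
   means every null |s| lies below every alternative |s|.  Since
   cosh(a y) cosh(b x) <= cosh(a x) cosh(b y) for 0 <= a <= b, 0 <= x <= y,
   the alternative-to-null mass ratio is nondecreasing in |x| and the lfdr,
   null / (null + alternative), is nonincreasing in |z_k|.  Changing the
   coordinates one at a time compares z with z'. *)

Section Cosh.
Variable R : realType.
Implicit Types a b s t x y : R.

Definition cosh s : R := (expR s + expR (- s)) / 2.

Lemma coshN s : cosh (- s) = cosh s.
Proof. by rewrite /cosh opprK addrC. Qed.

Lemma cosh_norm s : cosh `|s| = cosh s.
Proof. by case: (leP 0 s) => [/ger0_norm|/ltr0_norm] ->; rewrite ?coshN. Qed.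

Lemma coshM s t : cosh s * cosh t = (cosh (s + t) + cosh (s - t)) / 2.
Proof. by rewrite /cosh !opprD opprK !expRD; ring. Qed.

Lemma cosh_ge0_le s t : 0 <= s -> s <= t -> cosh s <= cosh t.
Proof.
move=> s_ge0 st.
have -> : cosh t = cosh s + (expR t - expR s) * (1 - (expR s * expR t)^-1) / 2.
  by rewrite /cosh !expRN; field; rewrite ?mulf_neq0 ?gt_eqF ?expR_gt0.
rewrite lerDl divr_ge0 // mulr_ge0 // subr_ge0 ?ler_expR //.
by rewrite -expRD invf_le1 ?expR_gt0 // -expR0 ler_expR; lra.
Qed.

Lemma cosh_le s t : `|s| <= `|t| -> cosh s <= cosh t.
Proof. by move=> st; rewrite -cosh_norm -[cosh t]cosh_norm cosh_ge0_le. Qed.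

Lemma cosh_TP2 a b x y : 0 <= a <= b -> 0 <= x <= y ->
  cosh (a * y) * cosh (b * x) <= cosh (a * x) * cosh (b * y).
Proof.
move=> /andP[a_ge0 ab] /andP[x_ge0 xy].
rewrite !coshM ler_wpM2r // lerD //; apply: cosh_le.
  by rewrite !ger0_norm; nra.
rewrite [`|a * x - b * y|]distrC [leRHS]ger0_norm; last by nra.
by rewrite ler_norml; apply/andP; split; nra.
Qed.

End Cosh.

Section NormalDensity.
Variable R : realType.
Implicit Types a b x y : R.

Lemma phi_gt0 x : 0 < phi x.
Proof. by rewrite /phi mulr_gt0 ?expR_gt0 // invr_gt0 sqrtr_gt0 mulr_gt0 // pi_gt0. Qed.

Definition phi_pm a x : R := phi (x - a) + phi (x + a).

Lemma phi_pmE a x : phi_pm a x =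
  2 * (Num.sqrt (2 * pi))^-1 * (expR (- (a ^+ 2) / 2) * expR (- (x ^+ 2) / 2)) * cosh (a * x).
Proof.
rewrite /phi_pm /phi /cosh.
have -> : - ((x - a) ^+ 2) / 2 = - (a ^+ 2) / 2 + - (x ^+ 2) / 2 + a * x by field.
have -> : - ((x + a) ^+ 2) / 2 = - (a ^+ 2) / 2 + - (x ^+ 2) / 2 + - (a * x) by field.
(* [field] would choke on the inverse square root, so it is made opaque. *)
by set c := (Num.sqrt _)^-1; rewrite !expRD; field.
Qed.

Lemma phi_pm_TP2 a b x y : `|a| <= `|b| -> `|x| <= `|y| ->
  phi_pm a y * phi_pm b x <= phi_pm a x * phi_pm b y.
Proof.
move=> ab xy; rewrite !phi_pmE.
set c := 2 * _; set g := fun u : R => expR (- (u ^+ 2) / 2).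
rewrite -!/(g _) mulrACA [leRHS]mulrACA.
have -> : c * (g a * g y) * (c * (g b * g x)) = c * (g a * g x) * (c * (g b * g y)).
  by ring.
have c_ge0 : 0 <= c by rewrite /c divr_ge0 ?sqrtr_ge0.
apply: ler_wpM2l; first by rewrite !mulr_ge0 ?expR_ge0.
rewrite -[cosh (a * y)]cosh_norm -[cosh (b * x)]cosh_norm.
rewrite -[cosh (a * x)]cosh_norm -[cosh (b * y)]cosh_norm !normrM.
by apply: cosh_TP2; rewrite normr_ge0 ?ab ?xy.
Qed.

End NormalDensity.

Section Sums.
Variable R : numDomainType.

Lemma ler_mul_sums (I J : eqType) (r : seq I) (s : seq J) (P : pred I) (Q : pred J)
    (F1 F2 : I -> R) (G1 G2 : J -> R) :
  (forall i j, i \in r -> P i -> j \in s -> Q j -> F1 i * G1 j <= F2 i * G2 j) ->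
  (\sum_(i <- r | P i) F1 i) * (\sum_(j <- s | Q j) G1 j) <=
  (\sum_(i <- r | P i) F2 i) * (\sum_(j <- s | Q j) G2 j).
Proof.
move=> FG; rewrite !mulr_suml big_seq_cond [leRHS]big_seq_cond.
apply: ler_sum => i /andP[ri Pi]; rewrite !mulr_sumr big_seq_cond [leRHS]big_seq_cond.
by apply: ler_sum => j /andP[sj Qj]; exact: FG.
Qed.

Lemma psumr_gt0_from (I : eqType) (r : seq I) (F G : I -> R) :
  {in r, forall i, 0 <= F i} -> {in r, forall i, 0 <= G i} ->
  {in r, forall i, 0 < F i -> 0 < G i} ->
  0 < \sum_(i <- r) F i -> 0 < \sum_(i <- r) G i.
Proof.
move=> F_ge0 G_ge0 FG; rewrite big_seq [X in _ -> _ < X]big_seq.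
rewrite !lt_def !sumr_ge0 ?andbT // !psumr_neq0 // => /hasP[i ri /andP[_ Fi]].
by apply/hasP; exists i; rewrite ?ri ?FG.
Qed.

End Sums.

Lemma ler_share (R : realFieldType) (n a n' a' : R) :
  0 < n + a -> 0 < n' + a' -> n' * a <= n * a' -> n' / (n' + a') <= n / (n + a).
Proof.
move=> na_gt0 na'_gt0 cross.
by rewrite ler_pdivrMr // mulrAC ler_pdivlMr // !mulrDr [n' * n]mulrC lerD2l.
Qed.

Section Configurations.
Variable K : nat.
Implicit Types (h : cfg K) (k : 'I_K).

Definition flip k h : cfg K := [ffun j => if j == k then rev_ord (h j) else h j].

Lemma hz_rev (c : 'I_3) : hz (rev_ord c) = - hz c.
Proof. by case: c => [[|[|[|n]]] Hc]. Qed.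

Lemma normr_hz (R : numDomainType) (c : 'I_3) : `|(hz c)%:~R : R| = (absz (hz c))%:R.
Proof. by rewrite natr_absz intr_norm. Qed.

Lemma absz_hz_le1 (c : 'I_3) : (absz (hz c) <= 1)%N.
Proof. by case: c => [[|[|[|n]]] Hc]. Qed.

Lemma flipK k : involutive (flip k).
Proof. by move=> h; apply/ffunP => j; rewrite !ffunE; case: eqP => // _; rewrite rev_ordK. Qed.

Lemma absz_hz_flip k h j : absz (hz (flip k h j)) = absz (hz (h j)).
Proof. by rewrite ffunE; case: eqP => _ //; rewrite hz_rev abszN. Qed.

Lemma bin_flip k h : bin (flip k h) = bin h.
Proof. by apply/setP => j; rewrite !inE absz_hz_flip. Qed.

Lemma inH0_flip k h : inH0 (flip k h) = inH0 h.
Proof. by rewrite /inH0; under eq_bigr do rewrite absz_hz_flip. Qed.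

Lemma inH0E h : inH0 h = (bin h != [set: 'I_K]).
Proof.
rewrite /inH0; have -> : (\sum_(k < K) absz (hz (h k)) = #|bin h|)%N.
  rewrite -sum1_card [RHS]big_mkcond; apply: eq_bigr => k _; rewrite inE.
  by case: (absz _) (absz_hz_le1 (h k)) => [|[|]].
by rewrite -properT properEcard finset.subsetT cardsT card_ord.
Qed.

End Configurations.

Section LocalFdr.
Variables (R : realType) (K : nat) (M : {set 'I_K} -> nat).
Variables (pr : {set 'I_K} -> nat -> R) (mu : {set 'I_K} -> nat -> 'I_K -> R).
Implicit Types (h : cfg K) (k : 'I_K) (z : 'I_K -> R) (x y : R).

Local Notation term := (cfg_term M pr mu).

Definition off_weight k z h m : R :=
  pr (bin h) m * \prod_(j < K | j != k) phi (z j - (hz (h j))%:~R * mu (bin h) m j).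

Definition shift k h m : R := (hz (h k))%:~R * mu (bin h) m k.

Lemma cfg_term_upd k z x h : term (upd z k x) h =
  \sum_(1 <= m < (M (bin h)).+1) off_weight k z h m * phi (x - shift k h m).
Proof.
rewrite /cfg_term; apply: eq_bigr => m _; rewrite (bigD1 k) //= {1}/upd eqxx mulrCA mulrC.
by congr (_ * _ * _); apply: eq_bigr => j /negbTE jk; rewrite /upd jk.
Qed.

Lemma off_weight_flip k z h m : off_weight k z (flip k h) m = off_weight k z h m.
Proof.
rewrite /off_weight bin_flip; congr (_ * _); apply: eq_bigr => j /negbTE jk.
by rewrite ffunE jk.
Qed.

Lemma shift_flip k h m : shift k (flip k h) m = - shift k h m.
Proof. by rewrite /shift bin_flip ffunE eqxx hz_rev intrN mulNr. Qed.

Lemma sum_cfg_term_upd_sym k z x (P : pred (cfg K)) :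
  (forall h, P (flip k h) = P h) ->
  2 * \sum_(h | P h) term (upd z k x) h =
  \sum_(h | P h) \sum_(1 <= m < (M (bin h)).+1) off_weight k z h m * phi_pm (shift k h m) x.
Proof.
move=> P_flip; rewrite mulr_natl mulr2n {2}(reindex_inj (can_inj (flipK k))) /=.
rewrite (eq_bigl _ _ P_flip) -big_split; apply: eq_bigr => h _.
rewrite !cfg_term_upd bin_flip -big_split; apply: eq_bigr => m _.
by rewrite off_weight_flip shift_flip opprK /= -mulrDr.
Qed.

Definition null_mass z := \sum_(h | inH0 h) term z h.
Definition alt_mass z := \sum_(h | ~~ inH0 h) term z h.

Lemma lfdrE z : lfdr M pr mu z = null_mass z / (null_mass z + alt_mass z).
Proof. by rewrite /lfdr [X in _ / X](bigID (@inH0 K)). Qed.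

Hypothesis params : csmGmm_params M pr mu.

Lemma pr_ge0 b m : (1 <= m <= M b)%N -> 0 <= pr b m.
Proof. by case: params => _ [_ [pr_ge0 _]]; exact: pr_ge0. Qed.

Lemma mu_ge0 b m k : (1 <= m <= M b)%N -> 0 <= mu b m k.
Proof.
case: params => _ [_ [_ [mu0 [mu_gt0 _]]]] Hm.
by case: (boolP (k \in b)) => kb; [exact/ltW/mu_gt0 | rewrite mu0].
Qed.

Lemma off_weight_ge0 k z h m : (1 <= m <= M (bin h))%N -> 0 <= off_weight k z h m.
Proof. by move=> Hm; rewrite mulr_ge0 ?pr_ge0 // prodr_ge0 // => j _; exact/ltW/phi_gt0. Qed.

Lemma null_alt_mass_gt0 z : 0 < null_mass z + alt_mass z.
Proof.
have -> : null_mass z + alt_mass z = \sum_h term z h by rewrite [RHS](bigID (@inH0 K)).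
have [_ [_ [_ [_ [_ [_ pr_sum1]]]]]] := params.
apply: (psumr_gt0_from (F := fun h => \sum_(1 <= m < (M (bin h)).+1) pr (bin h) m)).
- move=> h _ /=; rewrite big_seq sumr_ge0 // => m; rewrite mem_index_iota ltnS.
  exact: pr_ge0.
- move=> h _; rewrite /cfg_term big_seq sumr_ge0 // => m; rewrite mem_index_iota ltnS => Hm.
  by rewrite mulr_ge0 ?pr_ge0 // prodr_ge0 // => j _; exact/ltW/phi_gt0.
- move=> h _; apply: psumr_gt0_from => m; rewrite mem_index_iota ltnS => Hm.
  + exact: pr_ge0.
  + by rewrite mulr_ge0 ?pr_ge0 // prodr_ge0 // => j _; exact/ltW/phi_gt0.
  + by move=> pr_gt0; rewrite mulr_gt0 // prodr_gt0 // => j _; exact: phi_gt0.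
- by rewrite pr_sum1 ltr01.
Qed.

Lemma shift_null_le_alt k h h' m m' : inH0 h -> ~~ inH0 h' ->
  (1 <= m <= M (bin h))%N -> (1 <= m' <= M (bin h'))%N ->
  `|shift k h m| <= `|shift k h' m'|.
Proof.
rewrite !inH0E negbK => h_null /eqP h'_alt Hm; rewrite h'_alt => Hm'.
have [_ [_ [_ [_ [_ [mu_le _]]]]]] := params.
have mu_hm := mu_ge0 k Hm.
have k_alt : absz (hz (h' k)) = 1%N by move: (finset.in_setT k); rewrite -h'_alt inE => /eqP.
rewrite /shift h'_alt !normrM !normr_hz k_alt mul1r (ger0_norm mu_hm).
rewrite ger0_norm ?(le_trans mu_hm) ?(mu_le _ _ _ _ h_null Hm' Hm) //.
apply: le_trans (mu_le _ _ _ _ h_null Hm' Hm).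
by rewrite ler_piMl // lern1 absz_hz_le1.
Qed.

Lemma null_alt_mass_cross k z x y : `|x| <= `|y| ->
  null_mass (upd z k y) * alt_mass (upd z k x) <=
  null_mass (upd z k x) * alt_mass (upd z k y).
Proof.
move=> xy; rewrite -(@ler_pM2l _ (2 * 2)) // -[leLHS]mulrACA -[leRHS]mulrACA.
have alt_flip h : ~~ inH0 (flip k h) = ~~ inH0 h by rewrite inH0_flip.
rewrite /null_mass /alt_mass !(sum_cfg_term_upd_sym _ _ (inH0_flip k)).
rewrite !(sum_cfg_term_upd_sym _ _ alt_flip).
apply: ler_mul_sums => h h' _ h_null _ h'_alt.
apply: ler_mul_sums => m m'; rewrite !mem_index_iota !ltnS => Hm _ Hm' _.
rewrite mulrACA [leRHS]mulrACA; apply: ler_wpM2l.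
  by apply: mulr_ge0; exact: off_weight_ge0.
by apply: phi_pm_TP2 => //; exact: shift_null_le_alt.
Qed.

Lemma lfdr_upd_le k z x y : `|x| <= `|y| ->
  lfdr M pr mu (upd z k y) <= lfdr M pr mu (upd z k x).
Proof. by move=> xy; rewrite !lfdrE ler_share ?null_alt_mass_gt0 ?null_alt_mass_cross. Qed.

End LocalFdr.

Lemma coordinatewise_antitone (T : Type) (d : Order.disp_t) (V : porderType d) (K : nat)
    (f : ('I_K -> T) -> V) (rel : T -> T -> Prop) :
  (forall z k x y, rel x y -> (f (upd z k y) <= f (upd z k x))%O) ->
  forall z z', (forall k, rel (z' k) (z k)) -> (f z <= f z')%O.
Proof.
move=> f_upd z z' rel_z.
pose w j (i : 'I_K) := if (i < j)%N then z i else z' i.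
suff w_le j : (j <= K)%N -> (f (w j) <= f z')%O.
  by rewrite (_ : z = w K) ?w_le //; apply: funext => i; rewrite /w ltn_ord.
elim: j => [_|j IH jK]; first by rewrite (_ : w 0%N = z') //; exact: funext.
apply: le_trans (IH (ltnW jK)); set kj : 'I_K := Ordinal jK.
have -> : w j.+1 = upd (w j) kj (z kj).
  apply: funext => i; rewrite /w /upd ltnS leq_eqVlt.
  case: (eqVneq i kj) => [->|]; first by rewrite eqxx.
  by rewrite -val_eqE /= => /negbTE ->.
have {2}-> : w j = upd (w j) kj (z' kj).
  by apply: funext => i; rewrite /w /upd; case: eqP => [->|//]; rewrite ltnn.
exact: f_upd (rel_z kj).
Qed.

Theorem theorem1 (R : realType) (K : nat) (M : {set 'I_K} -> nat)
  (pr : {set 'I_K} -> nat -> R) (mu : {set 'I_K} -> nat -> 'I_K -> R) :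
  (2 <= K)%N ->
  csmGmm_params M pr mu ->
  [/\ (forall (k : 'I_K) (z : 'I_K -> R) (x y : R), 0 < x -> x <= y ->
         lfdr M pr mu (upd z k y) <= lfdr M pr mu (upd z k x)),
      (forall (k : 'I_K) (z : 'I_K -> R) (x y : R), x <= y -> y < 0 ->
         lfdr M pr mu (upd z k x) <= lfdr M pr mu (upd z k y))
    & (forall z z' : 'I_K -> R,
         (forall k, Num.sg (z k) = Num.sg (z' k) /\ `|z' k| <= `|z k|) ->
         lfdr M pr mu z <= lfdr M pr mu z')].
Proof.
move=> _ params; split.
- move=> k z x y x_gt0 xy; apply: lfdr_upd_le => //.
  by rewrite !ger0_norm; lra.
- move=> k z x y xy y_lt0; apply: lfdr_upd_le => //.
  by rewrite !ltr0_norm; lra.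
- move=> z z' zz'.
  apply: (coordinatewise_antitone (rel := fun x y : R => `|x| <= `|y|)).
    by move=> w k x y; exact: lfdr_upd_le.
  by move=> k; case: (zz' k).
Qed.
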